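(* Let $\varphi_1,\varphi_2:\mathbb{R}^d\to\mathbb{R}$ and suppose $x_{\varphi_1}\in\arg\min_x\varphi_1(x)$ and $x_{\varphi_2}\in\arg\min_x\varphi_2(x)$. (i) If each $\varphi_i$ admits a $\nu_{\varphi_i}$ error bound, then $$\nu_{\varphi_1}(\|x_{\varphi_1}-x_{\varphi_2}\|_2)+\nu_{\varphi_2}(\|x_{\varphi_1}-x_{\varphi_2}\|_2)\le \varphi_2(x_{\varphi_1})-\varphi_1(x_{\varphi_1})-\big(\varphi_2(x_{\varphi_2})-\varphi_1(x_{\varphi_2})\big).$$ (ii) If $\varphi_2-\varphi_1$ is differentiable and $\varphi_2$ has $\nu_{\varphi_2}$ gradient growth, then $$\nu_{\varphi_2}(\|x_{\varphi_1}-x_{\varphi_2}\|_2)\le \langle x_{\varphi_1}-x_{\varphi_2},\nabla(\varphi_2-\varphi_1)(x_{\varphi_1})\rangle .$$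
   Context: Let $\nu(r):=\inf\{s:\omega(s)\ge r\}$ be the generalized inverse of a non-decreasing function $\omega$ with $\omega(0)=0$. A function $\varphi$ admits a $\nu$ error bound if $\nu(\|x-x^*\|_2)\le\varphi(x)-\varphi(x^* )$ for $x^*=\arg\min_{x'}\varphi(x')$ and all $x\in\mathbb{R}^d$. A function $\varphi$ has $\nu$ gradient growth if $\varphi$ is subdifferentiable and $\nu(\|x-y\|_2)\le\langle y-x,u-v\rangle$ for all $x,y\in\mathbb{R}^d$ and all $u\in\partial\varphi(y)$, $v\in\partial\varphi(x)$, where $\partial$ denotes the subdifferential. *)

From HB Require Import structures.
From mathcomp Require Import all_boot all_order all_algebra.
From mathcomp Require Import all_classical all_reals all_analysis.
Set Implicit Arguments. Unset Strict Implicit. Unset Printing Implicit Defensive.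
Import Order.TTheory GRing.Theory Num.Theory.
Import numFieldNormedType.Exports.
Local Open Scope classical_set_scope.
Local Open Scope ring_scope.

Section Defs.
Variables (R : realType) (d : nat).

Definition dotp (u v : 'rV[R]_d) : R := \sum_(i < d) u 0 i * v 0 i.
Definition norm2 (u : 'rV[R]_d) : R := Num.sqrt (\sum_(i < d) u 0 i ^+ 2).

(* generalized inverse nu(r) = inf { s >= 0 : omega(s) >= r }, valued in \bar R
   (inf of the empty set is +oo) *)
Definition geninv (omega : R -> R) (r : R) : \bar R :=
  ereal_inf [set s%:E | s in [set s : R | 0 <= s /\ r <= omega s]].

Definition admissible (omega : R -> R) : Prop :=
  omega 0 = 0 /\ (forall s t : R, 0 <= s -> s <= t -> omega s <= omega t).

Definition is_argmin (phi : 'rV[R]_d -> R) (xs : 'rV[R]_d) : Prop :=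
  forall x, phi xs <= phi x.

Definition error_bound (nu : R -> \bar R) (phi : 'rV[R]_d -> R) : Prop :=
  forall xs, is_argmin phi xs ->
  forall x, (nu (norm2 (x - xs)) <= (phi x - phi xs)%:E)%E.

Definition subdiff (phi : 'rV[R]_d -> R) (x : 'rV[R]_d) : set 'rV[R]_d :=
  [set u | forall y, phi x + dotp u (y - x) <= phi y].

Definition subdifferentiable (phi : 'rV[R]_d -> R) : Prop :=
  forall x, subdiff phi x !=set0.

Definition gradient_growth (nu : R -> \bar R) (phi : 'rV[R]_d -> R) : Prop :=
  subdifferentiable phi /\
  forall x y u v, subdiff phi y u -> subdiff phi x v ->
    (nu (norm2 (x - y)) <= (dotp (y - x) (u - v))%:E)%E.

Definition gradient (f : 'rV[R]_d -> R) (x : 'rV[R]_d) : 'rV[R]_d :=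
  \row_(i < d) ('d f x (\row_(j < d) (i == j)%:R : 'rV[R]_d)).

End Defs.

From HB Require Import structures.
From mathcomp Require Import all_boot all_order all_algebra.
From mathcomp Require Import all_classical all_reals all_analysis.
From mathcomp Require Import ring lra.
Import Order.TTheory GRing.Theory Num.Theory.
Import numFieldNormedType.Exports.
Local Open Scope ring_scope.

(* Part (i) is the sum of the two error bounds, each evaluated at the other
   function's minimiser.
   Part (ii): since x1 minimises phi1, every chord slope of h := phi2 - phi1 from
   x1 is dominated by the corresponding chord slope of phi2, which is convex
   because it is subdifferentiable; letting the step go to 0 shows that the
   gradient of h at x1 is a subgradient of phi2 at x1.  As 0 is a subgradient of
   phi2 at its minimiser x2, gradient growth applied to these two subgradients
   gives the bound.  Neither part uses any property of omega1, omega2. *)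

Section OneSidedDerivative.
Variables (R : realType) (V : normedModType R).

Lemma derive_le_chord (h : V -> R) (x w : V) (c : R) :
  derivable h x w ->
  (forall t, 0 < t < 1 -> h (x + t *: w) - h x <= t * c) ->
  'D_w h x <= c.
Proof.
move=> dh chord; apply: (cvgr_to_le (cvg_dnbhs_at_right dh)).
near=> t.
have t_gt0 : 0 < t by near: t; exact: nbhs_right_gt.
have t_lt1 : t < 1 by near: t; exact: nbhs_right_lt.
rewrite /= -[_ *: _]/(t^-1 * _) ler_pdivrMl // [t *: w + x]addrC; apply: chord.
by rewrite t_gt0 t_lt1.
Unshelve. all: by end_near.
Qed.

End OneSidedDerivative.

Section ErrorBoundsAndGradientGrowth.
Variables (R : realType) (d : nat).
Set Implicit Arguments. Unset Strict Implicit.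
Implicit Types (phi : 'rV[R]_d -> R) (u v w x y : 'rV[R]_d).

Lemma norm2_subC u v : norm2 (u - v) = norm2 (v - u).
Proof.
rewrite /norm2 -opprB; congr Num.sqrt; apply: eq_bigr => i _.
by rewrite mxE sqrrN.
Qed.

Lemma dotpC u v : dotp u v = dotp v u.
Proof. by apply: eq_bigr => i _; rewrite mulrC. Qed.

Lemma dotpZr u (a : R) v : dotp u (a *: v) = a * dotp u v.
Proof. by rewrite /dotp mulr_sumr; apply: eq_bigr => i _; rewrite mxE mulrCA. Qed.

Lemma dotp0l v : dotp 0 v = 0.
Proof. by rewrite /dotp big1 // => i _; rewrite mxE mul0r. Qed.

Lemma diff_dotp_gradient (h : 'rV[R]_d -> R) x w :
  'd h x w = dotp w (gradient h x).
Proof.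
pose e i : 'rV[R]_d := \row_(j < d) (i == j)%:R.
have coord v i : \sum_(j < d) v 0 j * (j == i)%:R = v 0 i.
  rewrite (bigD1 i) //= big1 ?eqxx ?mulr1 ?addr0 // => j /negbTE ->.
  by rewrite mulr0.
have -> : w = \sum_(i < d) w 0 i *: e i.
  apply/rowP => i; rewrite summxE -coord; apply: eq_bigr => j _.
  by rewrite !mxE.
rewrite linear_sum /dotp; apply: eq_bigr => i _.
rewrite linearZ /= mxE; congr (_ * _).
by rewrite summxE -coord; apply: eq_bigr => j _; rewrite !mxE.
Qed.

Lemma error_bound_sum (nu1 nu2 : R -> \bar R) phi1 phi2 x1 x2 :
  is_argmin phi1 x1 -> is_argmin phi2 x2 ->
  error_bound nu1 phi1 -> error_bound nu2 phi2 ->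
  (nu1 (norm2 (x1 - x2)) + nu2 (norm2 (x1 - x2))
     <= (phi2 x1 - phi1 x1 - (phi2 x2 - phi1 x2))%:E)%E.
Proof.
move=> min1 min2 eb1 eb2.
have := leeD (eb1 x1 min1 x2) (eb2 x2 min2 x1).
by rewrite norm2_subC -EFinD; congr (_ <= _%:E)%E; ring.
Qed.

Lemma argmin_subdiff0 phi x : is_argmin phi x -> subdiff phi x 0.
Proof. by move=> min y; rewrite dotp0l addr0. Qed.

Lemma subdifferentiable_chord phi x w (t : R) :
  subdifferentiable phi -> 0 <= t -> t <= 1 ->
  phi (x + t *: w) - phi x <= t * (phi (x + w) - phi x).
Proof.
move=> sd t_ge0 t_le1; set z := x + t *: w.
have [v sub_v] := sd z.
have to_x : x - z = (- t) *: w by rewrite opprD addNKr scaleNr.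
have to_xw : x + w - z = (1 - t) *: w by rewrite opprD addrACA subrr add0r scalerBl scale1r.
have := sub_v x; have := sub_v (x + w).
rewrite to_x to_xw !dotpZr => below_xw below_x.
have t'_ge0 : 0 <= 1 - t by rewrite subr_ge0.
have := lerD (ler_wpM2l t_ge0 below_xw) (ler_wpM2l t'_ge0 below_x).
lra.
Qed.

Lemma gradient_subdiff phi1 phi2 x1 :
  is_argmin phi1 x1 -> subdifferentiable phi2 ->
  differentiable (phi2 \- phi1) x1 ->
  subdiff phi2 x1 (gradient (phi2 \- phi1) x1).
Proof.
move=> min1 sd2 dh y.
rewrite dotpC -diff_dotp_gradient -deriveE // -lerBrDl -[in phi2 y](subrKC x1 y).
apply: derive_le_chord => [|t /andP[t_gt0 t_lt1]]; first exact: diff_derivable.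
have := subdifferentiable_chord x1 (y - x1) sd2 (ltW t_gt0) (ltW t_lt1).
have := min1 (x1 + t *: (y - x1)); rewrite /=; lra.
Qed.

Lemma gradient_growth_le_dotp_gradient (nu : R -> \bar R) phi1 phi2 x1 x2 :
  is_argmin phi1 x1 -> is_argmin phi2 x2 ->
  differentiable (phi2 \- phi1) x1 -> gradient_growth nu phi2 ->
  (nu (norm2 (x1 - x2)) <= (dotp (x1 - x2) (gradient (phi2 \- phi1) x1))%:E)%E.
Proof.
move=> min1 min2 dh [sd2 growth].
have := growth x2 x1 _ _ (gradient_subdiff min1 sd2 dh) (argmin_subdiff0 min2).
by rewrite subr0 norm2_subC.
Qed.

End ErrorBoundsAndGradientGrowth.

Theorem lemma1 (R : realType) (d : nat) (phi1 phi2 : 'rV[R]_d -> R)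
  (x1 x2 : 'rV[R]_d) (omega1 omega2 : R -> R) :
  admissible omega1 -> admissible omega2 ->
  is_argmin phi1 x1 -> is_argmin phi2 x2 ->
  (error_bound (geninv omega1) phi1 -> error_bound (geninv omega2) phi2 ->
     (geninv omega1 (norm2 (x1 - x2)) + geninv omega2 (norm2 (x1 - x2))
       <= (phi2 x1 - phi1 x1 - (phi2 x2 - phi1 x2))%:E)%E)
  /\
  ((forall x, differentiable (phi2 \- phi1) x) ->
   gradient_growth (geninv omega2) phi2 ->
     (geninv omega2 (norm2 (x1 - x2))
       <= (dotp (x1 - x2) (gradient (phi2 \- phi1) x1))%:E)%E).
Proof.
move=> _ _ min1 min2; split; first exact: error_bound_sum.
by move=> dh; apply: gradient_growth_le_dotp_gradient.
Qed.
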